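(* Let $n\ge2$ and let $G,H$ be non-zero $n$-dimensional real tensors. Let their $n$-dimensional convolution $(G*H)(t)=\sum_{\tau\in\mathbb{Z}^n}G(\tau)H(t-\tau)$ be evaluated on a box of consecutive output positions of size $s_1\times\cdots\times s_n$, giving $G*H\in\mathbb{R}^{s_1\times\cdots\times s_n}$. Then for each $k=1,\dots,n$, $\operatorname{rank}(k,G*H)\le\min\big(s_k,\operatorname{rank}(k,G)\operatorname{rank}(k,H)\big)$.
   Context: Tensors are indexed from $0$ and regarded as functions on $\mathbb{Z}^n$ vanishing outside their index ranges. For a tensor $A$, $\operatorname{rank}(k,A)$ is the $k$-th Tucker rank, i.e. the rank of the mode-$k$ matricization of $A$ (the matrix whose columns are the mode-$k$ fibers of $A$); for a matrix this is its column/row rank. *)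

From HB Require Import structures.
From mathcomp Require Import all_boot all_order all_algebra.
From mathcomp Require Import reals.
Set Implicit Arguments. Unset Strict Implicit. Unset Printing Implicit Defensive.
Import Order.TTheory GRing.Theory Num.Theory.
Local Open Scope ring_scope.

Definition idx (n : nat) (d : 'I_n -> nat) : finType :=
  {dffun forall i : 'I_n, 'I_(d i)}.

Definition tensor (R : ringType) (n : nat) (d : 'I_n -> nat) :=
  {ffun idx d -> R}.

Definition oidx (n : nat) (d : 'I_n -> nat) (k : 'I_n) : finType :=
  {dffun forall j : {j : 'I_n | j != k}, 'I_(d (val j))}.

Definition merge n (d : 'I_n -> nat) (k : 'I_n) (i : 'I_(d k)) (c : oidx d k)
  : idx d :=
  [ffun j : 'I_n => match j =P k with
                    | ReflectT e => cast_ord (congr1 d (esym e)) i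
                    | ReflectF ne => c (exist _ j (introN eqP ne))
                    end].

Definition matricize (R : ringType) n (d : 'I_n -> nat) (k : 'I_n)
  (A : tensor R d) : 'M[R]_(d k, #|oidx d k|) :=
  \matrix_(i < d k, c < #|oidx d k|) A (merge i (enum_val c)).

Definition trank (R : fieldType) n (d : 'I_n -> nat) (k : 'I_n)
  (A : tensor R d) : nat := \rank (matricize k A).

(* A tensor regarded as a function on Z^n vanishing outside its range. *)
Definition tval (R : ringType) n (d : 'I_n -> nat) (A : tensor R d)
  (x : 'I_n -> int) : R :=
  match [pick t : idx d | [forall j, (t j)%:Z == x j]] with
  | Some t => A t
  | None => 0
  end.

(* n-dimensional convolution (G*H)(t) = sum_{tau in Z^n} G(tau) H(t - tau),
   evaluated on the box of output positions t = o + p, p in idx s.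
   (G vanishes outside its index range, so the sum is over its support.) *)
Definition conv (R : ringType) n (g h s : 'I_n -> nat) (o : 'I_n -> int)
  (G : tensor R g) (H : tensor R h) : tensor R s :=
  [ffun p : idx s => \sum_(tau : idx g)
      G tau * tval H (fun j => o j + (p j)%:Z - (tau j)%:Z)].

(* Take rank factorizations C_G R_G and C_H R_H of the mode-k matricizations
   of G and H, extended by zero to all integer indices. Substituting them into
   (G*H)(t) = sum_tau G(tau) H(o + t - tau) and summing over tau separately in
   mode k and in the other modes, every entry of the mode-k matricization of
   G*H at (i, c) becomes a sum, over the rank_k(G) rank_k(H) pairs of rank
   indices, of a factor depending only on i times one depending only on c.
   So this matricization is a product through an inner dimension
   rank_k(G) rank_k(H); the bound s_k is its number of rows. *)

From Pilot Require Import Defs.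
From HB Require Import structures.
From mathcomp Require Import all_boot all_order all_algebra.
From mathcomp Require Import reals.
Set Implicit Arguments. Unset Strict Implicit. Unset Printing Implicit Defensive.
Import Order.TTheory GRing.Theory Num.Theory.
Local Open Scope ring_scope.

(* [Defs.merge] and [Defs.tval] must be qualified: [path.merge] and
   [tuple.tval] shadow them. *)
Section MultiIndex.
Variables (n : nat) (d : 'I_n -> nat) (k : 'I_n).

Definition other_idx (t : idx d) : oidx d k :=
  @finfun _ (fun j : {j : 'I_n | j != k} => 'I_(d (val j))) (fun j => t (val j)).

Lemma other_idxE (t : idx d) j : other_idx t j = t (val j).
Proof. by rewrite ffunE. Qed.

(* [merge] reuses [j =P k] inside [introN eqP ne]; generalizing that term first
   is what lets [case: (j =P k)] abstract the match. *)
Lemma merge_at (i : 'I_(d k)) (c : oidx d k) : Defs.merge i c k = i.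
Proof.
apply/val_inj; rewrite ffunE; move: (@introN _ _ (k =P k)) => neq_kk.
by case: (k =P k).
Qed.

Lemma merge_off (i : 'I_(d k)) (c : oidx d k) j (jk : j != k) :
  Defs.merge i c j = c (exist _ j jk).
Proof.
rewrite ffunE; move: (@introN _ _ (j =P k)) => neq_jk.
case: (j =P k) => [jk'|jk']; first by case/eqP: (jk).
by rewrite (bool_irrelevance (neq_jk jk') jk).
Qed.

Lemma other_idx_merge (i : 'I_(d k)) (c : oidx d k) :
  other_idx (Defs.merge i c) = c.
Proof. by apply/ffunP => -[j jk]; rewrite other_idxE /= merge_off. Qed.

Lemma merge_other_idx (t : idx d) : Defs.merge (t k) (other_idx t) = t.
Proof.
apply/ffunP => j; have [->|jk] := eqVneq j k; first by rewrite merge_at.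
by rewrite merge_off other_idxE.
Qed.

Lemma big_idx_merge (V : nmodType) (F : 'I_(d k) -> oidx d k -> V) :
  \sum_(t : idx d) F (t k) (other_idx t) = \sum_a \sum_c F a c.
Proof.
rewrite pair_big (reindex (fun p : 'I_(d k) * oidx d k => Defs.merge p.1 p.2)) /=.
  by apply: eq_bigr => -[a c] _; rewrite merge_at other_idx_merge.
exists (fun t : idx d => (t k, other_idx t)) => [[a c] _|t _] /=.
  by rewrite merge_at other_idx_merge.
by rewrite merge_other_idx.
Qed.

End MultiIndex.

Lemma rank_leq_outer_sum (F : fieldType) (T : finType) m p (M : 'M[F]_(m, p))
    (u : T -> 'I_m -> F) (v : T -> 'I_p -> F) :
  (forall i j, M i j = \sum_x u x i * v x j) -> (\rank M <= #|T|)%N.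
Proof.
move=> eqM.
have -> : M = \matrix_(i < m, e < #|T|) u (enum_val e) i
               *m \matrix_(e < #|T|, j < p) v (enum_val e) j.
  apply/matrixP => i j; rewrite eqM !mxE big_enum_val.
  by apply: eq_bigr => e _; rewrite !mxE.
exact: leq_trans (mxrankM_maxl _ _) (rank_leq_col _).
Qed.

Section TensorRankFactor.
Variables (R : fieldType) (n : nat) (d : 'I_n -> nat) (k : 'I_n) (A : tensor R d).
Let M := matricize k A.

Lemma tensor_rank_factor (t : idx d) :
  A t = \sum_x col_base M (t k) x * row_base M x (enum_rank (other_idx k t)).
Proof.
transitivity ((col_base M *m row_base M) (t k) (enum_rank (other_idx k t))).
  by rewrite mulmx_base mxE enum_rankK merge_other_idx.
by rewrite mxE.
Qed.

Definition col_base_ext (z : int) (x : 'I_(trank k A)) : R :=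
  if [pick a : 'I_(d k) | a%:Z == z] is Some a then col_base M a x else 0.

Definition row_base_ext (w : {j : 'I_n | j != k} -> int) (x : 'I_(trank k A)) : R :=
  if [pick c : oidx d k | [forall j, (c j)%:Z == w j]] is Some c
  then row_base M x (enum_rank c) else 0.

Lemma tval_rank_factor (x : 'I_n -> int) z w :
  z = x k -> (forall j : {j : 'I_n | j != k}, w j = x (val j)) ->
  Defs.tval A x = \sum_y col_base_ext z y * row_base_ext w y.
Proof.
move=> -> xw; rewrite /Defs.tval /col_base_ext /row_base_ext.
case: pickP => [t /forallP /= xt | notx].
  case: pickP => [a /eqP xa | no_a]; last first.
    by move: (no_a (t k)); rewrite (eqP (xt k)) eqxx.
  case: pickP => [c /forallP /= cw | no_c]; last first.
    case/negP: (negbT (no_c (other_idx k t))); apply/forallP => j.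
    by rewrite other_idxE xw (eqP (xt _)).
  have -> : a = t k by apply/val_inj/eqP; rewrite -eqz_nat xa (eqP (xt k)).
  have -> : c = other_idx k t.
    apply/ffunP => j; apply/val_inj/eqP.
    by rewrite other_idxE -eqz_nat (eqP (cw j)) xw (eqP (xt _)).
  exact: tensor_rank_factor.
symmetry; apply: big1 => y _.
case: pickP => [a /eqP xa | _]; last by rewrite mul0r.
case: pickP => [c /forallP /= cw | _]; last by rewrite mulr0.
case/negP: (notx (Defs.merge a c)); apply/forallP => j.
have [->|jk] := eqVneq j k; first by rewrite merge_at xa.
by rewrite merge_off (eqP (cw _)) xw.
Qed.

End TensorRankFactor.

Arguments col_base_ext {R n d} k A z x.
Arguments row_base_ext {R n d} k A w x.

Section ConvRankFactor.
Variables (R : fieldType) (n : nat) (g h s : 'I_n -> nat) (o : 'I_n -> int)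
  (G : tensor R g) (H : tensor R h) (k : 'I_n).
Let MG := matricize k G.
Let T := ('I_(trank k G) * 'I_(trank k H))%type.

Definition conv_col (xy : T) (i : 'I_(s k)) : R :=
  \sum_(a < g k) col_base MG a xy.1 * col_base_ext k H (o k + i%:Z - a%:Z) xy.2.

Definition conv_row (xy : T) (c : oidx s k) : R :=
  \sum_(c' : oidx g k) row_base MG xy.1 (enum_rank c') *
    row_base_ext k H (fun j => o (val j) + (c j)%:Z - (c' j)%:Z) xy.2.

Lemma conv_rank_factor (i : 'I_(s k)) (c : oidx s k) :
  conv s o G H (Defs.merge i c) = \sum_(xy : T) conv_col xy i * conv_row xy c.
Proof.
pose Hcol (a : 'I_(g k)) := col_base_ext k H (o k + i%:Z - a%:Z).
pose Hrow (c' : oidx g k) :=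
  row_base_ext k H (fun j => o (val j) + (c j)%:Z - (c' j)%:Z).
rewrite ffunE.
pose F a c' := (\sum_x col_base MG a x * row_base MG x (enum_rank c')) *
  \sum_y Hcol a y * Hrow c' y.
transitivity (\sum_(t : idx g) F (t k) (other_idx k t)).
  apply: eq_bigr => t _; rewrite /F -tensor_rank_factor.
  congr (_ * _); apply: tval_rank_factor => [|[j jk]] /=.
    by rewrite merge_at.
  by rewrite other_idxE merge_off.
rewrite big_idx_merge.
transitivity (\sum_a \sum_c' \sum_(xy : T)
    (col_base MG a xy.1 * Hcol a xy.2) *
    (row_base MG xy.1 (enum_rank c') * Hrow c' xy.2)).
  apply: eq_bigr => a _; apply: eq_bigr => c' _.
  rewrite /F big_distrlr pair_big /=.
  by apply: eq_bigr => -[x y] _; rewrite mulrACA.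
rewrite exchange_big; under eq_bigr do rewrite exchange_big.
rewrite exchange_big; apply: eq_bigr => xy _.
by rewrite big_distrlr exchange_big.
Qed.

End ConvRankFactor.

Arguments conv_col {R n g h s} o G H k xy i.
Arguments conv_row {R n g h s} o G H k xy c.

Theorem lemma30 (R : realType) (n : nat) (g h s : 'I_n -> nat)
  (o : 'I_n -> int) (G : tensor R g) (H : tensor R h) :
  (2 <= n)%N -> G != 0 -> H != 0 ->
  forall k : 'I_n,
    (trank k (conv s o G H) <= minn (s k) (trank k G * trank k H))%N.
Proof.
move=> _ _ _ k; rewrite leq_min rank_leq_row /=.
have := rank_leq_outer_sum (u := conv_col o G H k)
  (v := fun xy j => conv_row o G H k xy (enum_val j)).
rewrite card_prod !card_ord; apply=> i j.
by rewrite mxE conv_rank_factor.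
Qed.
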